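(* Let $H$ be a $k$-graph on vertex set $[n]$ ($n$ divisible by $q$) and let $r=r(n)\ll n^{k-3/2}$. Let $\sigma_1,\dots,\sigma_r$ be independent uniformly random permutations of $[n]$ and $D_i=D_{\sigma_i}$. Then with probability $1-o(n^{-1})$, for every $t$ with $1\le t\le 2q-k$, every set $S$ of $k+t$ vertices is condensed in at most $4q+1$ of the $D_i$.
   Context: Fixed integers $k,\ell$ with $1\le\ell<k/2$; $z=\lceil(k-\ell)/\ell\rceil$, $q=\ell z$. $a_n\ll b_n$ means $b_n/a_n\to\infty$. For ordered $q$-tuples $\mathbf v_1=(v_1,\dots,v_q)$, $\mathbf v_2=(v_{q+1},\dots,v_{2q})$ let $e_i(\mathbf v_1,\mathbf v_2)=\{v_{i\ell+1},\dots,v_{i\ell+k}\}$, $i=0,\dots,z-1$; $\mathbf v_1$ precedes $\mathbf v_2$ if all these are edges of $H$, and then $(\mathbf v_1,\mathbf v_2)$ owns these $z$ edges. For a permutation $\sigma$ of $[n]$, $D_\sigma$ has vertex set $\{(\sigma((i-1)q+1),\dots,\sigma(iq)):i\le n/q\}$ and an arc $\mathbf v\to\mathbf w$ ($\mathbf v\ne\mathbf w$) iff $\mathbf v$ precedes $\mathbf w$. Each edge $e$ of $H$ is owned by at most one arc $u_i(e)$ of $D_i$; if it exists, $\phi_i(e)$ denotes the set of $z$ edges owned by $u_i(e)$ (so $e\in\phi_i(e)$). A set $S$ of $k+t$ vertices is condensed in $D_i$ if there exist edges $e_1\neq e_2$ of $H$ with $S=e_1\cup e_2$ and $\phi_i(e_1)\cap\phi_i(e_2)\neq\emptyset$.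 *)

From HB Require Import structures.
From mathcomp Require Import all_boot all_order all_algebra all_fingroup.
From mathcomp Require Import reals.
Set Implicit Arguments. Unset Strict Implicit. Unset Printing Implicit Defensive.
Import Order.TTheory GRing.Theory Num.Theory.

(* Parameters: k, l with 1 <= l < k/2;  z = ceil((k-l)/l), q = l*z. *)
Definition zpar (k l : nat) : nat := (k - l + l.-1) %/ l.
Definition qpar (k l : nat) : nat := l * zpar k l.

Section Construction.
Variables (k l n : nat).
Variable H : {set {set 'I_n}}.

Definition kgraph : bool := [forall e in H, #|e| == k].

(* the sequence sigma(1), ..., sigma(n) (0-indexed: sigma 0, ..., sigma (n-1)) *)
Definition perm_seq (s : {perm 'I_n}) : seq 'I_n := [seq s x | x <- enum 'I_n].

(* the i-th vertex of D_sigma (0-indexed), the q-tuple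
   (sigma(i q + 1), ..., sigma((i+1) q)) in 1-indexed notation *)
Definition block (s : {perm 'I_n}) (i : nat) : seq 'I_n :=
  take (qpar k l) (drop (i * qpar k l) (perm_seq s)).

Definition eseg (v1 v2 : seq 'I_n) (m : nat) : {set 'I_n} :=
  [set x | x \in take k (drop (m * l) (v1 ++ v2))].

Definition precedes (v1 v2 : seq 'I_n) : bool :=
  [forall m : 'I_(zpar k l), eseg v1 v2 m \in H].

(* vertices of D_sigma are indexed by 'I_(n %/ q); distinct indices give
   distinct tuples. Arc i -> j iff i <> j and block i precedes block j. *)
Definition arc (s : {perm 'I_n}) (i j : 'I_(n %/ qpar k l)) : bool :=
  (i != j) && precedes (block s i) (block s j).

Definition owned (s : {perm 'I_n}) (i j : 'I_(n %/ qpar k l)) : {set {set 'I_n}} :=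
  if arc s i j then [set eseg (block s i) (block s j) m | m : 'I_(zpar k l)]
  else set0.

Definition owns (s : {perm 'I_n}) (i j : 'I_(n %/ qpar k l)) (e : {set 'I_n}) : bool :=
  e \in owned s i j.

(* phi_sigma(e): the edges owned by the (at most one) arc owning e *)
Definition phi (s : {perm 'I_n}) (e : {set 'I_n}) : {set {set 'I_n}} :=
  \bigcup_(a : 'I_(n %/ qpar k l) * 'I_(n %/ qpar k l) | owns s a.1 a.2 e)
     owned s a.1 a.2.

Definition condensed (s : {perm 'I_n}) (S : {set 'I_n}) : bool :=
  [exists e1 in H, exists e2 in H,
     [&& e1 != e2, S == e1 :|: e2 & phi s e1 :&: phi s e2 != set0]].

Definition bad (r : nat) (sg : {ffun 'I_r -> {perm 'I_n}}) : bool :=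
  [exists t : 'I_(2 * qpar k l - k).+1, exists S : {set 'I_n},
     [&& 1 <= t, #|S| == k + t
       & 4 * qpar k l + 1 < #|[set i : 'I_r | condensed (sg i) S]| ]].
End Construction.

Definition prob_bad (R : numFieldType) (k l n : nat) (H : {set {set 'I_n}})
    (r : nat) : R :=
  #|[set sg : {ffun 'I_r -> {perm 'I_n}} | bad k l H sg]|%:R /
  #|{ffun 'I_r -> {perm 'I_n}}|%:R.

(* Conjugating by sigma, a set S condensed in D_sigma lies in the union of two
   q-blocks of positions: an edge owned by an arc meets both blocks of that arc,
   so two arcs owning a common edge have the same blocks.  By symmetry a fixed S
   of size m is therefore condensed by a uniform sigma with probability
   O(n^(2-m)), and by independence at least 4q + 2 of sigma_1, ..., sigma_r
   condense it with probability at most r^(4q+2) O(n^((2-m)(4q+2))).  A union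
   bound over the n^m sets S and the values of t, using m >= k + 1 and
   r^2 = o(n^(2k-3)), leaves o(1/n). *)

From HB Require Import structures.
From mathcomp Require Import all_boot all_order all_algebra all_fingroup.
From mathcomp Require Import reals.
From mathcomp Require Import zify ring.
Set Implicit Arguments. Unset Strict Implicit. Unset Printing Implicit Defensive.

Lemma qpar_bounds k l : 0 < l < k -> k - l <= qpar k l < k.
Proof.
case/andP=> l_gt0 lk; rewrite /qpar /zpar.
have -> : k - l + l.-1 = k.-1 by lia.
have := divn_eq k.-1 l; have := ltn_pmod k.-1 l_gt0; nia.
Qed.

Lemma mem_take_drop_nth (T : eqType) (x0 : T) (s : seq T) a b p :
  p < b -> a + p < size s -> nth x0 s (a + p) \in take b (drop a s).
Proof.
move=> pb ps; rewrite -nth_drop -(nth_take x0 pb); apply: mem_nth.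
rewrite size_take size_drop; case: ifP; lia.
Qed.

Section Blocks.
Variables (k l n : nat).
Local Notation q := (qpar k l).
Implicit Types (s : {perm 'I_n}) (i j : nat).

Definition block_pair i j : {set 'I_n} :=
  [set x : 'I_n | (x %/ q == i) || (x %/ q == j)].

Lemma mem_block s i y : y \in block k l s i -> (s^-1)%g y %/ q = i.
Proof.
rewrite /block; have [->|q_gt0] := posnP q; first by rewrite take0.
rewrite /perm_seq -map_drop -map_take => /mapP [x x_in ->]; rewrite permK.
have : val x \in map val (take q (drop (i * q) (enum 'I_n))) by apply: map_f.
rewrite map_take map_drop val_enum_ord drop_iota take_iota mem_iota /= => /andP[lo hi].
apply/eqP; rewrite eqn_leq -ltnS ltn_divLR // leq_divRL // lo andbT mulSn; lia.
Qed.

Lemma size_block s i : i * q + q <= n -> size (block k l s i) = q.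
Proof.
by rewrite /block /perm_seq size_take size_drop size_map size_enum_ord; case: ifP; lia.
Qed.

Lemma eseg_sub_block_pair s i j m :
  (s^-1)%g @: eseg k l (block k l s i) (block k l s j) m \subset block_pair i j.
Proof.
apply/subsetP => _ /imsetP [y + ->]; rewrite !inE => /mem_take /mem_drop.
by rewrite mem_cat => /orP [] /mem_block ->; rewrite eqxx ?orbT.
Qed.

Hypotheses (l_gt0 : 0 < l) (lk : 2 * l < k).

(* The segment starts at position [m l < q] of the first block and ends at
   position [m l + k - 1 >= q], i.e. inside the second one. *)
Lemma eseg_meets_blocks s i j m : m < zpar k l ->
  i * q + q <= n -> j * q + q <= n ->
  (exists2 y, y \in eseg k l (block k l s i) (block k l s j) m & (s^-1)%g y %/ q = i) /\
  (exists2 y, y \in eseg k l (block k l s i) (block k l s j) m & (s^-1)%g y %/ q = j).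
Proof.
move=> mz iq jq.
have /andP [lq qk] : k - l <= q < k by apply: qpar_bounds; lia.
have ml : m * l + l <= q by rewrite addnC -mulSn /qpar mulnC leq_mul2l mz orbT.
have n_gt0 : 0 < n by lia.
pose x0 : 'I_n := Ordinal n_gt0.
have size_i := size_block s iq; have size_j := size_block s jq.
set v1 := block k l s i in size_i *; set v2 := block k l s j in size_j *.
have mem_eseg p : p < k -> nth x0 (v1 ++ v2) (m * l + p) \in eseg k l v1 v2 m.
  move=> pk; rewrite inE mem_take_drop_nth // size_cat size_i size_j; nia.
split.
  exists (nth x0 (v1 ++ v2) (m * l + 0)); first by apply: mem_eseg; lia.
  rewrite nth_cat addn0 ifT; last by rewrite size_i; lia.
  by apply/mem_block/mem_nth; rewrite size_i; lia.
exists (nth x0 (v1 ++ v2) (m * l + k.-1)); first by apply: mem_eseg; lia.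
rewrite nth_cat size_i ifF; last by apply/negbTE; rewrite -leqNgt; lia.
by apply/mem_block/mem_nth; rewrite size_j; nia.
Qed.

Lemma qpar_gt0 : 0 < q.
Proof. have /andP[] : k - l <= q < k by apply: qpar_bounds; lia. lia. Qed.

Variable H : {set {set 'I_n}}.

Lemma block_end_le (i : 'I_(n %/ q)) : i * q + q <= n.
Proof. by rewrite addnC -mulSn -leq_divRL ?qpar_gt0. Qed.

Lemma owned_eseg s (i j : 'I_(n %/ q)) e : e \in owned H s i j ->
  exists m : 'I_(zpar k l), e = eseg k l (block k l s i) (block k l s j) m.
Proof.
rewrite /owned; case: ifP => _; last by rewrite inE.
by case/imsetP => m _ ->; exists m.
Qed.

Lemma owned_sub_block_pair s (i j : 'I_(n %/ q)) e :
  e \in owned H s i j -> (s^-1)%g @: e \subset block_pair i j.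
Proof. by case/owned_eseg => m ->; apply: eseg_sub_block_pair. Qed.

Lemma owned2_block_pair s (i1 j1 i2 j2 : 'I_(n %/ q)) f :
  f \in owned H s i1 j1 -> f \in owned H s i2 j2 ->
  block_pair i2 j2 \subset block_pair i1 j1.
Proof.
move=> /owned_sub_block_pair /subsetP sub1 /owned_eseg [m def_f].
have [[y y_f y_i2] [z z_f z_j2]] :=
  eseg_meets_blocks s (ltn_ord m) (block_end_le i2) (block_end_le j2).
rewrite -def_f in y_f z_f.
have := sub1 _ (imset_f _ y_f); have := sub1 _ (imset_f _ z_f).
rewrite !inE y_i2 z_j2 => j2_in i2_in.
by apply/subsetP => x; rewrite !inE => /orP [] /eqP ->.
Qed.

Lemma condensed_block_pair s S : condensed k l H s S ->
  exists i j : 'I_(n %/ q), (s^-1)%g @: S \subset block_pair i j.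
Proof.
case/existsP => e1 /andP [_ /existsP [e2 /andP [_ /and3P [_ /eqP -> /set0Pn [f]]]]].
rewrite inE /phi => /andP [/bigcupP [[i1 j1] /= e1_own f_own1]].
move=> /bigcupP [[i2 j2] /= e2_own f_own2].
exists i1, j1; rewrite imsetU subUset (owned_sub_block_pair e1_own) /=.
exact: subset_trans (owned_sub_block_pair e2_own) (owned2_block_pair f_own1 f_own2).
Qed.

End Blocks.

Section PermutationsInto.
Variable T : finType.
Implicit Types A B P S : {set T}.

Lemma perm_imset_eq A B : #|A| = #|B| -> exists tau : {perm T}, tau @: A = B.
Proof.
move: {2}#|A :\: B| (erefl #|A :\: B|) => d.
elim: d A => [|d IHd] A dAB AB.
  have -> : A = B by apply/eqP; rewrite eqEcard AB leqnn andbT -setD_eq0 -cards_eq0 dAB.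
  by exists 1%g; rewrite -[RHS]imset_id; apply: eq_imset => y; rewrite perm1.
have [x x_in] : exists x, x \in A :\: B by apply/card_gt0P; rewrite dAB.
have [y y_in] : exists y, y \in B :\: A.
  by apply/card_gt0P; rewrite cardsD setIC -AB -cardsD dAB.
move: x_in y_in; rewrite !inE => /andP [xB xA] /andP [yA yB].
set t := tperm x y.
have tAB : (t @: A) :\: B = (A :\: B) :\ x.
  apply/setP => z; rewrite (can2_imset_pre _ (tpermK x y) (tpermK x y)) !inE /t.
  by case: tpermP => [->|->|/eqP/negbTE -> _]; rewrite ?eqxx ?(negbTE yA) ?yB ?andbF.
have [tau tauAB] : exists tau : {perm T}, tau @: (t @: A) = B.
  apply: IHd; last by rewrite card_imset //; apply: perm_inj.
  by rewrite tAB; have := cardsD1 x (A :\: B); rewrite dAB !inE xA xB /=; lia.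
by exists (t * tau)%g; rewrite -tauAB -imset_comp; apply: eq_imset => z; rewrite permM.
Qed.

Definition perms_into P S := [set s : {perm T} | (s^-1)%g @: S \subset P].

Lemma card_perms_into_eq P A B :
  #|A| = #|B| -> #|perms_into P A| = #|perms_into P B|.
Proof.
case/perm_imset_eq => tau <-.
have -> : perms_into P (tau @: A) = (fun s => s * tau^-1)%g @^-1: perms_into P A.
  apply/setP => s; rewrite !inE -imset_comp.
  by rewrite (@eq_imset _ _ _ ((s * tau^-1)^-1)%g) // => x; rewrite /= invMg invgK permM.
by rewrite card_preimset //; apply: mulIg.
Qed.

Lemma perm_imsetV_sub (s : {perm T}) P A : ((s^-1)%g @: A \subset P) = (A \subset s @: P).
Proof. by rewrite (can2_imset_pre _ (permK s) (permKV s)) sub_imset_pre. Qed.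

Lemma card_perms_into P S :
  #|perms_into P S| * 'C(#|T|, #|S|) = #|{perm T}| * 'C(#|P|, #|S|).
Proof.
have sum_draws : \sum_(A in [set A : {set T} | #|A| == #|S|]) #|perms_into P A| =
                 #|perms_into P S| * 'C(#|T|, #|S|).
  rewrite -card_draws mulnC -sum_nat_const; apply: eq_bigr => A.
  by rewrite inE => /eqP /card_perms_into_eq.
rewrite -sum_draws -cardsT -sum_nat_const.
under eq_bigr do rewrite -sum1_card.
rewrite (exchange_big_dep (mem [set: {perm T}])) /=; last by move=> *; rewrite inE.
apply: eq_bigr => s _; rewrite sum1dep_card -(card_imset P (@perm_inj _ s)) -cards_draws.
by apply: eq_card => A; rewrite !inE perm_imsetV_sub andbC.
Qed.

End PermutationsInto.

Lemma card_bigcup_le (I T : finType) (P : pred I) (F : I -> {set T}) :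
  #|\bigcup_(i | P i) F i| <= \sum_(i | P i) #|F i|.
Proof.
elim/big_ind2: _ => [|a U b V Ua Vb|//]; first by rewrite cards0.
by rewrite (leq_trans (leq_card_setU U V)) ?leq_add.
Qed.

Section IndependentDraws.
Variables (J T : finType).
Implicit Types (A : {set T}) (I : {set J}).

Lemma card_ffun_all_in A I :
  #|[set g : {ffun J -> T} | [forall i in I, g i \in A]]| =
  #|A| ^ #|I| * #|T| ^ (#|J| - #|I|).
Proof.
pose F i := if i \in I then mem A else mem (T : {pred T}).
have -> : #|[set g : {ffun J -> T} | [forall i in I, g i \in A]]| = #|family F|.
  apply: eq_card => g; rewrite inE.
  apply/forall_inP/familyP => [g_in i | g_in i iI]; rewrite /F.
    by case: ifP => [/g_in|].
  by have := g_in i; rewrite /F iI.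
rewrite card_family foldrE big_map big_enum /= (bigID (mem I)) /=.
rewrite (eq_bigr (fun _ => #|A|)) => [|i iI]; last by rewrite /F iI.
rewrite [X in _ * X](eq_bigr (fun _ => #|T|)) => [|i iI]; last first.
  by rewrite /F (negbTE iI) cardT enumT.
rewrite !prod_nat_const -(cardsC I) addKn; congr (_ * _ ^ _).
by apply: eq_card => i; rewrite !inE.
Qed.

Lemma card_ffun_many_in A M :
  #|[set g : {ffun J -> T} | M <= #|[set i | g i \in A]|]| * #|T| ^ M <=
  'C(#|J|, M) * #|A| ^ M * #|T| ^ #|J|.
Proof.
set G := [set g : {ffun J -> T} | _].
have G_sub : G \subset \bigcup_(I : {set J} | #|I| == M)
    [set g : {ffun J -> T} | [forall i in I, g i \in A]].
  apply/subsetP => g; rewrite inE => hits; apply/bigcupP.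
  have uniq_hits := take_uniq M (enum_uniq [set i | g i \in A]).
  exists [set i in take M (enum [set i | g i \in A])].
    rewrite cardsE (card_uniqP uniq_hits) size_take -cardE.
    by case: ltnP => // ?; apply/eqP; lia.
  by rewrite inE; apply/forall_inP => i; rewrite inE => /mem_take; rewrite mem_enum inE.
have card_G : #|G| <= 'C(#|J|, M) * (#|A| ^ M * #|T| ^ (#|J| - M)).
  apply: leq_trans (subset_leq_card G_sub) (leq_trans (card_bigcup_le _ _) _).
  rewrite (eq_bigr (fun _ => #|A| ^ M * #|T| ^ (#|J| - M))) => [|I /eqP <-].
    by rewrite sum_nat_const -cardsE card_draws.
  exact: card_ffun_all_in.
have [MJ | JM] := leqP M #|J|.
  apply: leq_trans (leq_mul card_G (leqnn _)) _.
  by rewrite -!mulnA -expnD subnK.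
by move: card_G; rewrite bin_small // leqn0 => /eqP ->.
Qed.
End IndependentDraws.

Lemma leq_pexp2r m n e : m <= n -> m ^ e <= n ^ e.
Proof. by case: e => // e; rewrite leq_exp2r. Qed.

Lemma leq_ffact_exp n m : n ^_ m <= n ^ m.
Proof. by elim: m => // m IHm; rewrite ffactnSr expnSr leq_mul ?leq_subr. Qed.

Lemma leq_exp_ffact n m : (n - m) ^ m <= n ^_ m.
Proof.
elim: m => // m IHm; rewrite ffactnSr expnSr leq_mul ?leq_sub2l //.
exact: leq_trans (leq_pexp2r _ (leq_sub2l n (leqnSn m))) IHm.
Qed.

Lemma leq_bin_exp n m : 'C(n, m) <= n ^ m.
Proof. by rewrite (leq_trans _ (leq_ffact_exp n m)) // -bin_ffact leq_pmulr ?fact_gt0. Qed.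

Lemma leq_exp_bin n m : 2 * m <= n -> n ^ m <= 'C(n, m) * (2 * m) ^ m.
Proof.
move=> le_2m_n; apply: leq_trans (leq_pexp2r m (_ : n <= 2 * (n - m))) _; first lia.
rewrite !expnMn mulnCA leq_mul2l (leq_trans (leq_exp_ffact n m)) ?orbT //.
by rewrite -bin_ffact leq_mul2l -ffactnn leq_ffact_exp orbT.
Qed.

Section CondensedCount.
Variables (k l n : nat) (H : {set {set 'I_n}}).
Hypotheses (l_gt0 : 0 < l) (lk : 2 * l < k).
Local Notation q := (qpar k l).
Implicit Types S : {set 'I_n}.

Definition condensing S := [set s : {perm 'I_n} | condensed k l H s S].

Lemma card_block_pair i j : #|block_pair k l n i j| <= 2 * q.
Proof.
have q_gt0 := qpar_gt0 l_gt0 lk.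
have card_block i' : #|[set x : 'I_n | x %/ q == i']| <= q.
  pose rem (x : 'I_n) : 'I_q := Ordinal (ltn_pmod x q_gt0).
  rewrite -[q in _ <= q]card_ord -(card_in_imset (f := rem)); first exact: max_card.
  move=> x y; rewrite !inE => /eqP x_i /eqP y_i /(congr1 val) /= xy.
  by apply/val_inj; rewrite /= (divn_eq x q) (divn_eq y q) x_i y_i xy.
have -> : block_pair k l n i j =
          [set x : 'I_n | x %/ q == i] :|: [set x : 'I_n | x %/ q == j].
  by apply/setP => x; rewrite !inE.
by rewrite mul2n -addnn (leq_trans (leq_card_setU _ _)) ?leq_add.
Qed.

Lemma card_condensing_bin S :
  #|condensing S| * 'C(n, #|S|) <= (n %/ q) ^ 2 * n`! * (2 * q) ^ #|S|.
Proof.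
have sub : condensing S \subset \bigcup_(p : 'I_(n %/ q) * 'I_(n %/ q))
    perms_into (block_pair k l n p.1 p.2) S.
  apply/subsetP => s; rewrite inE => /(condensed_block_pair l_gt0 lk) [i [j sub]].
  by apply/bigcupP; exists (i, j); rewrite ?inE.
have card_sub := leq_trans (subset_leq_card sub) (card_bigcup_le _ _).
apply: leq_trans (leq_mul card_sub (leqnn _)) _.
rewrite big_distrl /=.
apply: (@leq_trans (\sum_(p : 'I_(n %/ q) * 'I_(n %/ q)) n`! * (2 * q) ^ #|S|)).
  apply: leq_sum => p _; rewrite -[X in 'C(X, _)]card_ord card_perms_into card_Sn leq_mul2l.
  by rewrite (leq_trans (leq_bin2l _ (card_block_pair _ _)) (leq_bin_exp _ _)) orbT.
by rewrite sum_nat_const card_prod !card_ord mulnn mulnA.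
Qed.

Definition condensing_const := (8 * q ^ 2) ^ (2 * q).

Lemma card_condensing_le S : 2 * #|S| <= n -> #|S| <= 2 * q ->
  #|condensing S| * n ^ #|S| <= condensing_const * n ^ 2 * n`!.
Proof.
move=> le_2S_n le_S_2q; have q_gt0 := qpar_gt0 l_gt0 lk.
have blocks_le : (n %/ q) ^ 2 <= n ^ 2 := leq_pexp2r 2 (leq_div n q).
have const_le : (2 * q) ^ #|S| * (2 * #|S|) ^ #|S| <= condensing_const.
  rewrite -expnMn (leq_trans (leq_pexp2r _ (_ : _ <= 8 * q ^ 2))) //; first nia.
  by apply: leq_pexp2l; first nia.
apply: leq_trans (leq_mul (leqnn _) (leq_exp_bin le_2S_n)) _.
rewrite mulnA (leq_trans (leq_mul (card_condensing_bin S) (leqnn _))) // -mulnA.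
by rewrite (leq_trans (leq_mul (leq_mul blocks_le (leqnn _)) const_le)) // mulnC mulnA.
Qed.

Definition many_condensing r M S :=
  [set g : {ffun 'I_r -> {perm 'I_n}} | M <= #|[set i | g i \in condensing S]|].

Lemma card_many_condensing_le r M S : 2 * #|S| <= n -> #|S| <= 2 * q ->
  #|many_condensing r M S| * n ^ (#|S| * M) <= (r * condensing_const * n ^ 2) ^ M * n`! ^ r.
Proof.
move=> le_2S_n le_S_2q; set G := #|many_condensing r M S|.
have many := card_ffun_many_in 'I_r (condensing S) M.
rewrite card_Sn !card_ord -/G in many.
have one := leq_pexp2r M (card_condensing_le le_2S_n le_S_2q).
have bin := leq_bin_exp r M.
rewrite -(leq_pmul2r (_ : 0 < n`! ^ M)) ?expn_gt0 ?fact_gt0 // expnM.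
rewrite !expnMn in one *.
set a := #|condensing S| ^ M in many one; set F := n`! ^ M in many one *.
set N := (n ^ #|S|) ^ M in one *; set c := condensing_const ^ M in one *.
set m2 := n ^ M * n ^ M in one *; set rM := r ^ M in bin *.
set C := 'C(r, M) in many bin; set Fr := n`! ^ r in many *.
have step1 : G * F * N <= C * a * Fr * N by rewrite leq_mul2r many orbT.
have step2 : C * (a * N) * Fr <= rM * (c * m2 * F) * Fr by rewrite leq_mul2r leq_mul ?orbT.
lia.
Qed.

Lemma card_many_condensing_sized_le r M m : 2 * m <= n -> m <= 2 * q ->
  n * (\sum_(S : {set 'I_n} | #|S| == m) #|many_condensing r M S|) * n ^ (m * M) <=
  r ^ M * n ^ (m + 1 + 2 * M) * (condensing_const ^ M * n`! ^ r).
Proof.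
move=> le_2m_n le_m_2q.
have each S : #|S| == m -> #|many_condensing r M S| * n ^ (m * M) <=
    (r * condensing_const * n ^ 2) ^ M * n`! ^ r.
  by move=> /eqP S_m; rewrite -S_m; apply: card_many_condensing_le; rewrite S_m.
rewrite -mulnA big_distrl /=.
apply: (@leq_trans (n * \sum_(S : {set 'I_n} | #|S| == m)
                       (r * condensing_const * n ^ 2) ^ M * n`! ^ r)).
  by apply: leq_mul => //; apply: leq_sum.
rewrite sum_nat_const -cardsE card_draws card_ord.
apply: leq_trans (leq_mul (leqnn n) (leq_mul (leq_bin_exp n m) (leqnn _))) _.
rewrite !expnMn !expnD -expnM; lia.
Qed.

Lemma card_bad_le r :
  #|[set g : {ffun 'I_r -> {perm 'I_n}} | bad k l H g]| <=
  \sum_(t < (2 * q - k).+1 | 0 < t)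
    \sum_(S : {set 'I_n} | #|S| == k + t) #|many_condensing r (4 * q + 2) S|.
Proof.
have sub : [set g : {ffun 'I_r -> {perm 'I_n}} | bad k l H g] \subset
    \bigcup_(t < (2 * q - k).+1 | 0 < t)
      \bigcup_(S : {set 'I_n} | #|S| == k + t) many_condensing r (4 * q + 2) S.
  apply/subsetP => g; rewrite inE => /existsP [t /existsP [S /and3P [t_gt0 S_card many]]].
  apply/bigcupP; exists t => //; apply/bigcupP; exists S => //.
  rewrite !inE (eq_card (B := [set i | condensed k l H (g i) S])) => [|i].
    by rewrite -addn1 -addnA in many.
  by rewrite !inE.
apply: leq_trans (subset_leq_card sub) (leq_trans (card_bigcup_le _ _) _).
by apply: leq_sum => t _; apply: card_bigcup_le.
Qed.
End CondensedCount.

Import Order.TTheory GRing.Theory Num.Theory.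
Local Open Scope ring_scope.

Lemma exponent_balance k q m : (2 <= k)%N -> (k + 1 <= m)%N -> (k < 2 * q)%N ->
  (m + 1 + 2 * (4 * q + 2) + (2 * k - 3) * (2 * q + 1) <= m * (4 * q + 2))%N.
Proof. by move=> k2 km kq; rewrite -(subnK km); move: (m - (k + 1))%N => j; nia. Qed.

Lemma ler_of_power_growth (R : realFieldType) (X x rho d G : R) (e a b p : nat) :
  1 <= x -> 0 <= rho -> 0 <= d <= 1 -> (0 < b)%N -> 0 <= G -> (e + a * b <= p)%N ->
  rho ^+ 2 <= d * x ^+ a -> X * x ^+ p <= rho ^+ (2 * b) * x ^+ e * G -> X <= d * G.
Proof.
move=> x_ge1 rho_ge0 /andP [d_ge0 d_le1] b_gt0 G_ge0 le_p rho_le bound.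
have x_gt0 : 0 < x := lt_le_trans ltr01 x_ge1.
have x_ge0 := ltW x_gt0.
have rho_pow : rho ^+ (2 * b) <= d * x ^+ (a * b).
  have dx_ge0 : 0 <= d * x ^+ a by rewrite mulr_ge0 ?exprn_ge0.
  rewrite [rho ^+ _]exprM [x ^+ _]exprM.
  rewrite (le_trans (lerXn2r _ _ _ rho_le)) ?nnegrE ?sqr_ge0 //.
  by rewrite exprMn ler_wpM2r ?exprn_ge0 // ler_iXnr ?d_ge0.
rewrite -(ler_pM2r (exprn_gt0 p x_gt0)) (le_trans bound) //.
apply: le_trans (_ : d * x ^+ (a * b) * x ^+ e * G <= _).
  by rewrite !ler_wpM2r ?exprn_ge0.
rewrite (_ : _ * _ * G = d * G * x ^+ (a * b + e)); last by rewrite exprD; ring.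
by rewrite ler_wpM2l ?mulr_ge0 // ler_weXn2l // addnC.
Qed.

Lemma n_prob_bad_le (R : realFieldType) k l n (H : {set {set 'I_n}}) r (d : R) :
  (0 < l)%N -> (2 * l < k)%N -> (4 * qpar k l <= n)%N -> 0 <= d <= 1 ->
  r%:R ^+ 2 <= d * n%:R ^+ (2 * k - 3) ->
  n%:R * prob_bad R k l H r <=
    ((2 * qpar k l - k).+1 * condensing_const k l ^ (4 * qpar k l + 2))%:R * d.
Proof.
move=> l_gt0 lk le_4q_n d01 r_le.
have /andP [le_q lt_qk] : (k - l <= qpar k l < k)%N by apply: qpar_bounds; lia.
set q := qpar k l in le_4q_n le_q lt_qk *.
set G : R := (condensing_const k l ^ (4 * q + 2) * n`! ^ r)%:R.
have F_gt0 : 0 < (n`! ^ r)%:R :> R by rewrite ltr0n expn_gt0 fact_gt0.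
rewrite /prob_bad card_ffun card_Sn card_ord mulrA ler_pdivrMr //.
have := card_bad_le k l H r; rewrite -(ler_nat R) => bad_le.
apply: le_trans (ler_wpM2l (ler0n R n) bad_le) _.
rewrite natr_sum mulr_sumr.
apply: le_trans (_ : \sum_(t < (2 * q - k).+1 | (0 < t)%N) d * G <= _).
  apply: ler_sum => t t_gt0; have t_le := ltn_ord t.
  apply: (@ler_of_power_growth _ _ n%:R r%:R _ _ (k + t + 1 + 2 * (4 * q + 2))
                                 (2 * k - 3) (2 * q + 1) ((k + t) * (4 * q + 2))).
  - by rewrite ler1n; lia.
  - exact: ler0n.
  - exact: d01.
  - by rewrite addn1.
  - exact: ler0n.
  - by apply: exponent_balance; lia.
  - exact: r_le.
  have [le_2m_n le_m_2q] : (2 * (k + t) <= n /\ k + t <= 2 * q)%N by lia.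
  have := card_many_condensing_sized_le H l_gt0 lk r (4 * q + 2) le_2m_n le_m_2q.
  rewrite /G -/q (_ : 2 * (2 * q + 1) = 4 * q + 2)%N; last lia.
  move: (condensing_const k l ^ _ * _)%N => Gn.
  by rewrite -(ler_nat R) !natrM !natrX; apply.
apply: le_trans (_ : \sum_(t < (2 * q - k).+1) d * G <= _).
  rewrite [X in _ <= X](bigID (fun t : 'I__ => 0 < t)%N) /= lerDl sumr_ge0 // => t _.
  by rewrite mulr_ge0 ?ler0n //; case/andP: d01.
rewrite sumr_const card_ord -mulr_natr /G !natrM le_eqVlt; apply/orP; left.
by apply/eqP; ring.
Qed.

Lemma sqr_le_of_le_mul_sqrt (R : rcfType) (x y e : R) (a : nat) :
  0 <= x -> 0 <= y -> 0 <= e -> y <= e * (x ^+ a * Num.sqrt x) ->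
  y ^+ 2 <= e ^+ 2 * x ^+ (2 * a).+1.
Proof.
move=> x_ge0 y_ge0 e_ge0 le_y.
rewrite (le_trans (lerXn2r 2 _ _ le_y)) ?nnegrE ?mulr_ge0 ?exprn_ge0 ?sqrtr_ge0 //.
by rewrite !exprMn sqr_sqrtr // -exprM -exprSr mulnC.
Qed.

Theorem lemma7 (R : realType) (k l : nat) (hl1 : (1 <= l)%N) (hlk : (2 * l < k)%N)
  (H : forall n : nat, {set {set 'I_n}})
  (Hk : forall n : nat, kgraph k (H n))
  (r : nat -> nat)
  (hr : forall eps : R, 0 < eps -> exists N : nat, forall n : nat, (N <= n)%N ->
          (r n)%:R <= eps * ((n%:R : R) ^+ (k - 2) * Num.sqrt (n%:R : R))) :
  forall eps : R, 0 < eps -> exists N : nat, forall n : nat, (N <= n)%N ->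
    (qpar k l %| n)%N ->
    (n%:R : R) * prob_bad R k l (H n) (r n) <= eps.
Proof.
move=> eps eps_gt0.
set C : R := ((2 * qpar k l - k).+1 * condensing_const k l ^ (4 * qpar k l + 2))%:R.
have C_gt0 : 0 < C by rewrite ltr0n muln_gt0 expn_gt0 /condensing_const expn_gt0 /=; nia.
set e := Num.min 1 (eps / C).
have e_gt0 : 0 < e by rewrite lt_min ltr01 divr_gt0.
have [e_le1 e_le] : e <= 1 /\ e <= eps / C by split; rewrite ge_min lexx ?orbT.
have [N hN] := hr e e_gt0.
exists (N + 4 * qpar k l)%N => n le_n _.
have r_le : (r n)%:R ^+ 2 <= e ^+ 2 * n%:R ^+ (2 * k - 3).
  rewrite (_ : 2 * k - 3 = (2 * (k - 2)).+1)%N; last lia.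
  apply: sqr_le_of_le_mul_sqrt; [exact: ler0n | exact: ler0n | exact: ltW | apply: hN; lia].
apply: le_trans (n_prob_bad_le (d := e ^+ 2) (H n) hl1 hlk _ _ r_le) _.
- lia.
- by rewrite sqr_ge0 exprn_ile1 // ltW.
by rewrite mulrC -ler_pdivlMr // (le_trans _ e_le) // ler_iXnr // ltW.
Qed.
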